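(* Let $(x,y)$ be an $\mathbf{x}$-vertex of $R$ and let $x'$ be a vertex of $P_A$ adjacent to $x$ in $P_A$. Then the step from $x$ to $x'$ lifts to $R$ (i.e., there exists $y'$ with $(x',y')\in R$ and $\operatorname{supp}(y')=\operatorname{supp}(y)$) if and only if $ax'\in\operatorname{Band}_{\mathbf{x}}(y)$.
   Context: Let $A\in\mathbb{R}^{m_1\times n_1}$, nonzero $a\in\mathbb{R}^{1\times n_1}$, nonzero $b\in\mathbb{R}^{1\times n_2}$, $B\in\mathbb{R}^{m_2\times n_2}$, $c_A\in\mathbb{R}^{m_1}$, $c_B\in\mathbb{R}^{m_2}$, $c_a,c_b\in\mathbb{R}$, and $R=\{(x,y)\in\mathbb{R}^{n_1}\times\mathbb{R}^{n_2}: Ax=c_A,\ ax+by=c_a+c_b,\ By=c_B,\ x,y\ge 0\}$. Assume $R$ is simple (nondegenerate). Let $P_A=\{x: Ax=c_A, x\ge 0\}$ and $Q_B=\{y: By=c_B, y\ge 0\}$. A vertex $(x,y)$ of $R$ is an $\mathbf{x}$-vertex if $x$ is a vertex of $P_A$. For such a vertex, $\operatorname{Band}_{\mathbf{x}}(y):=\{c_a+c_b-bz : Bz=c_B,\ \operatorname{supp}(z)\subseteq\operatorname{supp}(y),\ z\ge 0\}\subseteq\mathbb{R}$, where $\operatorname{supp}$ denotes the set of indices of nonzero coordinates. *)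

From HB Require Import structures.
From mathcomp Require Import all_boot all_order all_algebra.
Set Implicit Arguments. Unset Strict Implicit. Unset Printing Implicit Defensive.
Import Order.TTheory GRing.Theory Num.Theory.
Local Open Scope ring_scope.

Section Poly.
Variable R : realFieldType.

Definition stdpoly (m n : nat) (M : 'M[R]_(m, n)) (c : 'cV[R]_m) (z : 'cV[R]_n) : Prop :=
  M *m z = c /\ forall i, 0 <= z i 0.

Definition supp (n : nat) (z : 'cV[R]_n) : {set 'I_n} := [set i | z i 0 != 0].

Definition is_vertex (n : nat) (P : 'cV[R]_n -> Prop) (v : 'cV[R]_n) : Prop :=
  P v /\ forall y z t, P y -> P z -> 0 < t < 1 ->
    v = t *: y + (1 - t) *: z -> y = z.

Definition segment (n : nat) (u v : 'cV[R]_n) (w : 'cV[R]_n) : Prop :=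
  exists s, 0 <= s <= 1 /\ w = s *: u + (1 - s) *: v.

(* u, v adjacent vertices of P: distinct vertices whose segment is a face (edge) of P *)
Definition adjacent (n : nat) (P : 'cV[R]_n -> Prop) (u v : 'cV[R]_n) : Prop :=
  is_vertex P u /\ is_vertex P v /\ u <> v /\
  forall y z t, P y -> P z -> 0 < t < 1 ->
    segment u v (t *: y + (1 - t) *: z) -> segment u v y /\ segment u v z.

Definition simple_stdpoly (m n : nat) (M : 'M[R]_(m, n)) (c : 'cV[R]_m) : Prop :=
  forall v, is_vertex (stdpoly M c) v -> #|supp v| = \rank M.

(* constraint matrix and right-hand side of R, variables (x;y) = col_mx x y *)
Definition Rmat m1 n1 m2 n2 (A : 'M[R]_(m1, n1)) (a : 'rV[R]_n1) (b : 'rV[R]_n2)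
  (B : 'M[R]_(m2, n2)) : 'M[R]_(m1 + (1 + m2), n1 + n2) :=
  col_mx (row_mx A 0) (col_mx (row_mx a b) (row_mx 0 B)).

Definition Rrhs m1 m2 (cA : 'cV[R]_m1) (cB : 'cV[R]_m2) (ca cb : R)
  : 'cV[R]_(m1 + (1 + m2)) :=
  col_mx cA (col_mx (const_mx (ca + cb)) cB).

Definition Band m2 n2 (B : 'M[R]_(m2, n2)) (b : 'rV[R]_n2) (cB : 'cV[R]_m2)
  (ca cb : R) (y : 'cV[R]_n2) (r : R) : Prop :=
  exists z : 'cV[R]_n2, B *m z = cB /\ supp z \subset supp y /\
    (forall i, 0 <= z i 0) /\ r = ca + cb - (b *m z) 0 0.

End Poly.

From HB Require Import structures.
From mathcomp Require Import all_boot all_order all_algebra.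
From mathcomp Require Import ring lra.
Set Implicit Arguments. Unset Strict Implicit. Unset Printing Implicit Defensive.
Import Order.TTheory GRing.Theory Num.Theory.
Local Open Scope ring_scope.

(* Only the "if" direction has content. Let z witness a x' in Band(y), so
   that (x', z) lies in R with supp z a subset of supp y. Since x' is a vertex
   of P_A and the y-block of the vertex (x, y) has trivial kernel on supp y,
   (x', z) is a vertex of R, so |supp x'| + |supp z| = rank by simplicity.
   On the other hand, because [x, x'] is an edge, the kernel of the constraint
   matrix restricted to supp (x + x') and supp y is the line through
   (x - x', y - z); hence |supp (x + x')| + |supp y| <= rank + 1. As
   |supp x'| < |supp (x + x')|, this forces |supp y| <= |supp z|. *)

Lemma ker_in_line_card_le (F : fieldType) p k (N : 'M[F]_(p, k)) (e : 'cV[F]_k) :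
  (forall u : 'cV_k, N *m u = 0 -> exists l, u = l *: e) -> (k <= \rank N + 1)%N.
Proof.
move=> hline.
have ker_sub : (kermx N^T <= e^T)%MS.
  apply/row_subP => i; have [l hl] : exists l, (row i (kermx N^T))^T = l *: e.
    by apply: hline; apply: trmx_inj; rewrite trmx_mul trmxK -row_mul mulmx_ker row0 !trmx0.
  by rewrite -[row i _]trmxK hl linearZ /= scalemx_sub.
have := leq_trans (mxrankS ker_sub) (rank_leq_row e^T).
by rewrite mxrank_ker mxrank_tr leq_subLR addnC.
Qed.

Lemma ker_in_line_on_card_le (F : fieldType) p n (M : 'M[F]_(p, n)) (J : {set 'I_n})
    (e : 'cV[F]_n) :
  (forall d : 'cV_n, M *m d = 0 -> (forall i, i \notin J -> d i 0 = 0) ->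
     exists l, d = l *: e) ->
  (#|J| <= \rank M + 1)%N.
Proof.
move=> hline; pose S : 'M[F]_(n, #|J|) := \matrix_(i, j) (i == enum_val j)%:R.
have StS : S^T *m S = 1%:M.
  apply/matrixP => j j'; rewrite !mxE (bigD1 (enum_val j)) //= big1 ?addr0.
    by rewrite !mxE eqxx mul1r (inj_eq enum_val_inj).
  by move=> i /negbTE hi; rewrite !mxE hi mul0r.
apply: leq_trans (ker_in_line_card_le (N := M *m S) (e := S^T *m e) _) _; last first.
  by rewrite leq_add2r mxrankM_maxl.
move=> u; rewrite -mulmxA => /hline[i iJ|l hl]; last first.
  by exists l; rewrite scalemxAr -hl mulmxA StS mul1mx.
rewrite !mxE big1 // => j _; rewrite !mxE.
by case: eqP => [ij|]; [move: iJ; rewrite ij enum_valP | rewrite mul0r].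
Qed.

Section StdPoly.
Variables (R : realFieldType) (m n : nat) (M : 'M[R]_(m, n)) (c : 'cV[R]_m).
Local Notation P := (stdpoly M c).

Lemma supp_subsetP (d v : 'cV[R]_n) :
  reflect (forall i, v i 0 = 0 -> d i 0 = 0) (supp d \subset supp v).
Proof.
apply: (iffP subsetP) => [sdv i vi0 | hdv i].
  by move: (sdv i); rewrite !inE vi0 eqxx => /contraNeq->.
by rewrite !inE; apply: contraNneq => /hdv ->; rewrite eqxx.
Qed.

Lemma supp_addr_ge0 (u v : 'cV[R]_n) :
  (forall i, 0 <= u i 0) -> (forall i, 0 <= v i 0) ->
  supp (u + v) = supp u :|: supp v.
Proof.
by move=> hu hv; apply/setP => i; rewrite !inE mxE paddr_eq0 // negb_and.
Qed.

(* The step is 1 / (1 + sum_i |d_i| / v_i), the sum running over supp v. *)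
Lemma stdpoly_perturb v d :
  P v -> M *m d = 0 -> supp d \subset supp v ->
  exists2 eps : R, 0 < eps & P (v + eps *: d) /\ P (v - eps *: d).
Proof.
move=> [hMv hv] hMd /supp_subsetP hz.
pose t i := if v i 0 == 0 then 0 else `|d i 0| / v i 0.
have t_ge0 i : 0 <= t i.
  by rewrite /t; case: eqP => // _; apply: divr_ge0 (normr_ge0 _) (hv i).
pose s := \sum_i t i.
have s_ge0 : 0 <= s by apply: sumr_ge0.
have t_le_s i : t i <= s by rewrite /s (bigD1 i) //= lerDl sumr_ge0.
have s1_gt0 : 0 < 1 + s by lra.
have small i : `|(1 + s)^-1 * d i 0| <= v i 0.
  have [vi0|vi_neq0] := eqVneq (v i 0) 0; first by rewrite hz // mulr0 normr0 vi0.
  have vi_gt0 : 0 < v i 0 by rewrite lt0r vi_neq0 hv.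
  have := t_le_s i; rewrite /t (negbTE vi_neq0) ler_pdivrMr // => hd.
  rewrite normrM normfV (gtr0_norm s1_gt0) mulrC ler_pdivrMr //; nra.
exists (1 + s)^-1; first by rewrite invr_gt0.
have hM k : M *m (v + k *: d) = c by rewrite mulmxDr -scalemxAr hMd scaler0 addr0.
split; split; rewrite -?scaleNr //;
  by move=> i; rewrite !mxE; have := small i; rewrite ler_norml => /andP[]; lra.
Qed.

Lemma vertex_stdpolyP v :
  is_vertex P v <->
  P v /\ forall d, M *m d = 0 -> supp d \subset supp v -> d = 0.
Proof.
split=> [[hv hext] | [[hMv hv] hker]].
  split=> // d hMd hdv; have [eps eps_gt0 [hp hm]] := stdpoly_perturb hv hMd hdv.
  have half : 0 < (2^-1 : R) < 1 by apply/andP; split; lra.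
  have : v + eps *: d = v - eps *: d.
    by apply: hext hp hm half _; apply/matrixP => i j; rewrite !mxE; lra.
  move/matrixP => e; apply/matrixP => i j; move: (e i j); rewrite !mxE => eij.
  have /eqP : eps * d i j = 0 by lra.
  by rewrite mulf_eq0 gt_eqF //= => /eqP.
split=> // y z t [hMy hy] [hMz hz] /andP[t_gt0 t_lt1] hvt.
apply/eqP; rewrite -subr_eq0; apply/eqP/hker; first by rewrite mulmxBr hMy hMz subrr.
apply/supp_subsetP => i vi0; move/(congr1 (fun w : 'cV_n => w i 0)): hvt.
rewrite !mxE vi0 => e; have yi := hy i; have zi := hz i.
have yi0 : y i 0 = 0 by nra.
have zi0 : z i 0 = 0 by nra.
by rewrite yi0 zi0 subrr.
Qed.

Lemma vertex_supp_subset v w :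
  P v -> is_vertex P w -> supp v \subset supp w -> v = w.
Proof.
move=> [hMv hv] /vertex_stdpolyP[[hMw _] hker] /supp_subsetP svw.
apply/eqP; rewrite -subr_eq0; apply/eqP/hker; first by rewrite mulmxBr hMv hMw subrr.
by apply/supp_subsetP => i wi0; rewrite !mxE wi0 svw // subrr.
Qed.

(* Perturb the midpoint of [x, x'] along d: the perturbed points stay on the edge. *)
Lemma adjacent_ker x x' d :
  adjacent P x x' -> M *m d = 0 -> supp d \subset supp x :|: supp x' ->
  exists l, d = l *: (x - x').
Proof.
move=> [[[hMx hx] _] [[[hMx' hx'] _] [_ hedge]]] hMd hdxx'.
pose mid := 2^-1 *: x + (1 - 2^-1) *: x'.
have hmid : P mid.
  split; first by rewrite mulmxDr -!scalemxAr hMx hMx' -scalerDl subrKC scale1r.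
  by move=> i; rewrite !mxE; have := hx i; have := hx' i; lra.
have hdmid : supp d \subset supp mid.
  move: hdxx'; rewrite -supp_addr_ge0 // => /supp_subsetP hdxx'.
  apply/supp_subsetP => i; rewrite !mxE => midi0; apply: hdxx'; rewrite !mxE.
  by have := hx i; have := hx' i; lra.
have [eps eps_gt0 [hp hm]] := stdpoly_perturb hmid hMd hdmid.
have half : 0 < (2^-1 : R) < 1 by apply/andP; split; lra.
have [[s [_ hs]] _] : segment x x' (mid + eps *: d) /\ segment x x' (mid - eps *: d).
  apply: hedge hp hm half _; exists 2^-1; split; first by apply/andP; split; lra.
  by apply/matrixP => i j; rewrite !mxE; field.
exists ((s - 2^-1) / eps); apply/matrixP => i j.
move/(congr1 (fun w : 'cV_n => w i j)): hs; rewrite !mxE => e.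
apply: (mulfI (lt0r_neq0 eps_gt0)); rewrite mulrA mulrCA divff ?lt0r_neq0 // mulr1; lra.
Qed.

Lemma adjacent_card_supp_lt x x' :
  adjacent P x x' -> (#|supp x'| < #|supp x :|: supp x'|)%N.
Proof.
move=> [[hx _] [hx' [xx' _]]]; apply/proper_card/properUr.
by apply: contra_notN xx' => /(vertex_supp_subset hx hx').
Qed.

End StdPoly.

Section ColBlocks.
Variables (R : realFieldType) (n1 n2 : nat).
Implicit Types (u : 'cV[R]_n1) (w : 'cV[R]_n2).

Lemma col_mx_ge0 u w :
  (forall i, 0 <= col_mx u w i 0) <-> (forall i, 0 <= u i 0) /\ (forall i, 0 <= w i 0).
Proof.
split=> [h | [hu hw] i].
  by split=> i; [move: (h (lshift n2 i)) | move: (h (rshift n1 i))];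
    rewrite (col_mxEu, col_mxEd).
by rewrite -(splitK i); case: splitP => j _; rewrite (col_mxEu, col_mxEd).
Qed.

Lemma supp_col_mx_subset u w u' w' :
  (supp (col_mx u w) \subset supp (col_mx u' w')) =
  (supp u \subset supp u') && (supp w \subset supp w').
Proof.
apply/supp_subsetP/andP => [h | [/supp_subsetP hu /supp_subsetP hw] i].
  split; apply/supp_subsetP => i; [move: (h (lshift n2 i)) | move: (h (rshift n1 i))];
    by rewrite ?col_mxEu ?col_mxEd.
rewrite -(splitK i); case: splitP => j _;
  rewrite ?col_mxEu ?col_mxEd; [exact: hu | exact: hw].
Qed.

Lemma card_supp_col_mx u w : #|supp (col_mx u w)| = (#|supp u| + #|supp w|)%N.
Proof.
rewrite -!sum1_card big_split_ord /=.
by congr (_ + _)%N; apply: eq_bigl => i; rewrite !inE ?col_mxEu ?col_mxEd.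
Qed.

End ColBlocks.

Section Lift.
Variables (R : realFieldType) (m1 n1 m2 n2 : nat).
Variables (A : 'M[R]_(m1, n1)) (a : 'rV[R]_n1) (b : 'rV[R]_n2) (B : 'M[R]_(m2, n2)).
Variables (cA : 'cV[R]_m1) (cB : 'cV[R]_m2) (ca cb : R).
Local Notation PA := (stdpoly A cA).
Local Notation PR := (stdpoly (Rmat A a b B) (Rrhs cA cB ca cb)).
Implicit Types (u x : 'cV[R]_n1) (w y z : 'cV[R]_n2).

Lemma mul_Rmat_col_mx u w :
  Rmat A a b B *m col_mx u w = col_mx (A *m u) (col_mx (a *m u + b *m w) (B *m w)).
Proof. by rewrite /Rmat !mul_col_mx !mul_row_col !mul0mx addr0 add0r. Qed.

Lemma Rmat_kerP u w :
  Rmat A a b B *m col_mx u w = 0 <->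
  [/\ A *m u = 0, a *m u + b *m w = 0 & B *m w = 0].
Proof.
rewrite mul_Rmat_col_mx; split=> [|[-> -> ->]]; last by rewrite !col_mx0.
rewrite -[0 : 'cV_(m1 + _)]col_mx0 -[0 : 'cV_(1 + m2)]col_mx0.
by case/eq_col_mx => -> /eq_col_mx[-> ->].
Qed.

Lemma stdpoly_RmatP u w :
  PR (col_mx u w) <->
  [/\ PA u, a *m u + b *m w = const_mx (ca + cb), B *m w = cB & forall i, 0 <= w i 0].
Proof.
rewrite /stdpoly mul_Rmat_col_mx /Rrhs col_mx_ge0; split.
  by case=> /eq_col_mx[-> /eq_col_mx[-> ->]] [].
by case=> -[-> ?] -> -> ?.
Qed.

Lemma Band_of_stdpoly u w y :
  PR (col_mx u w) -> supp w \subset supp y -> Band B b cB ca cb y ((a *m u) 0 0).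
Proof.
case/stdpoly_RmatP=> _ /matrixP/(_ 0 0) hab hBw hw swy; exists w.
by do !split=> //; move: hab; rewrite !mxE => <-; lra.
Qed.

Lemma stdpoly_of_Band u y :
  PA u -> Band B b cB ca cb y ((a *m u) 0 0) ->
  exists2 z, PR (col_mx u z) & supp z \subset supp y.
Proof.
move=> hu [z [hBz [szy [hz hauz]]]]; exists z => //; apply/stdpoly_RmatP; split=> //.
by apply/matrixP => i j; rewrite !ord1 !mxE in hauz *; lra.
Qed.

Lemma vertex_Rmat_ker_lower x y w :
  is_vertex PR (col_mx x y) -> b *m w = 0 -> B *m w = 0 -> supp w \subset supp y ->
  w = 0.
Proof.
move=> /vertex_stdpolyP[_ hker] hbw hBw swy.
have s0 : supp (0 : 'cV[R]_n1) \subset supp x by apply/supp_subsetP => i _; rewrite mxE.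
suff /eq_col_mx[_ //] : col_mx (0 : 'cV_n1) w = col_mx 0 0 by [].
rewrite col_mx0; apply: hker; last by rewrite supp_col_mx_subset s0 swy.
by apply/Rmat_kerP; rewrite !mulmx0 add0r.
Qed.

Lemma vertex_Rmat_lift x y u z :
  is_vertex PR (col_mx x y) -> is_vertex PA u ->
  PR (col_mx u z) -> supp z \subset supp y -> is_vertex PR (col_mx u z).
Proof.
move=> hxy hu huz szy; apply/vertex_stdpolyP; split=> // d.
rewrite -[d]vsubmxK => /Rmat_kerP[hA hab hB]; rewrite supp_col_mx_subset => /andP[su sz].
have al0 : usubmx d = 0 by case/vertex_stdpolyP: hu => _; apply.
have be0 : dsubmx d = 0.
  apply: vertex_Rmat_ker_lower hxy _ hB (subset_trans sz szy).
  by rewrite -hab al0 mulmx0 add0r.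
by rewrite al0 be0 col_mx0.
Qed.

Lemma card_supp_adjacent_le x y x' z :
  is_vertex PR (col_mx x y) -> adjacent PA x x' ->
  PR (col_mx x' z) -> supp z \subset supp y ->
  (#|supp x :|: supp x'| + #|supp y| <= \rank (Rmat A a b B) + 1)%N.
Proof.
move=> hxy hadj hx'z szy.
have [_ hxy_eq hBy _] := (stdpoly_RmatP x y).1 hxy.1.
have [_ hx'z_eq hBz _] := (stdpoly_RmatP x' z).1 hx'z.
have [[[_ hx] _] [[[_ hx'] _] _]] := hadj.
have hbyz : b *m (y - z) = - (a *m (x - x')).
  apply/matrixP => i j; move: hxy_eq hx'z_eq => /matrixP/(_ i j) + /matrixP/(_ i j).
  by rewrite !mulmxBr !mxE; lra.
rewrite -supp_addr_ge0 // -card_supp_col_mx.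
apply: (ker_in_line_on_card_le (e := col_mx (x - x') (y - z))) => d.
rewrite -[d]vsubmxK => /Rmat_kerP[hA hab hB] hdJ.
have : supp (col_mx (usubmx d) (dsubmx d)) \subset supp (col_mx (x + x') y).
  apply/subsetP => i; rewrite !inE; apply: contraNneq => vi0.
  by apply/eqP/hdJ; rewrite inE vi0 eqxx.
rewrite supp_col_mx_subset => /andP[sal sbe].
rewrite supp_addr_ge0 // in sal; have [l hl] := adjacent_ker hadj hA sal.
exists l; rewrite scale_col_mx -hl; congr col_mx; apply/eqP; rewrite -subr_eq0; apply/eqP.
have hbd : b *m dsubmx d = - (a *m usubmx d) by apply/eqP; rewrite -addr_eq0 addrC hab.
apply: vertex_Rmat_ker_lower hxy _ _ _.
- by rewrite mulmxBr -scalemxAr hbyz hbd hl -scalemxAr scalerN opprK addNr.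
- by rewrite mulmxBr -scalemxAr mulmxBr hB hBy hBz subrr scaler0 subrr.
move/supp_subsetP: sbe => sbe; move/supp_subsetP: szy => szy.
apply/supp_subsetP => i yi0; move: (sbe i yi0) (szy i yi0).
by rewrite !mxE yi0 => -> ->; rewrite subrr mulr0 subrr.
Qed.

End Lift.

Theorem lemma1 (R : realFieldType) (m1 n1 m2 n2 : nat)
  (A : 'M[R]_(m1, n1)) (a : 'rV[R]_n1) (b : 'rV[R]_n2) (B : 'M[R]_(m2, n2))
  (cA : 'cV[R]_m1) (cB : 'cV[R]_m2) (ca cb : R)
  (ha : a != 0) (hb : b != 0)
  (hsimple : simple_stdpoly (Rmat A a b B) (Rrhs cA cB ca cb))
  (x x' : 'cV[R]_n1) (y : 'cV[R]_n2)
  (hvR : is_vertex (stdpoly (Rmat A a b B) (Rrhs cA cB ca cb)) (col_mx x y))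
  (hvx : is_vertex (stdpoly A cA) x)
  (hadj : adjacent (stdpoly A cA) x x') :
  (exists y' : 'cV[R]_n2,
      stdpoly (Rmat A a b B) (Rrhs cA cB ca cb) (col_mx x' y') /\ supp y' = supp y)
  <-> Band B b cB ca cb y ((a *m x') 0 0).
Proof.
split=> [[y' [hx'y' sy']] | hband]; first by apply: Band_of_stdpoly hx'y' _; rewrite sy'.
have hx' : is_vertex (stdpoly A cA) x' by case: hadj => _ [].
have [z hx'z szy] := stdpoly_of_Band hx'.1 hband.
exists z; split=> //; apply/eqP; rewrite eqEcard szy /=.
have card_x'z := hsimple _ (vertex_Rmat_lift hvR hx' hx'z szy).
rewrite card_supp_col_mx in card_x'z.
have le_rank := card_supp_adjacent_le hvR hadj hx'z szy.
have lt_x' := adjacent_card_supp_lt hadj.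
rewrite -(leq_add2l #|supp x'|) card_x'z -(leq_add2r 1).
by apply: leq_trans le_rank; rewrite addnAC addn1 leq_add2r.
Qed.
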